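(* Let $G=(V,E)$ be a finite undirected simple graph with an even number of vertices, and let $\mathrm{perfmat}\, G$ denote the number of perfect matchings of $G$. Then $$\mathrm{perfmat}\, G \le \prod_{v\in V} \big((\deg v)!\big)^{\frac{1}{2\deg v}},$$ with the convention $0^{1/0}=0$ (so the right-hand side is $0$ if some vertex has degree $0$). Equivalently, for every symmetric matrix $A\in\{0,1\}^{2n\times 2n}$ with zero diagonal and row sums $r_1,\dots,r_{2n}$, $$\mathrm{hafn}\, A \le \prod_{i=1}^{2n} (r_i!)^{\frac{1}{2r_i}}.$$
   Context: For a real symmetric $2n\times 2n$ matrix $A=[a_{ij}]$, the hafnian is $\mathrm{hafn}\, A=\sum \prod_{k=1}^n a_{i_kj_k}$, where the sum runs over all partitions $\{\{i_1,j_1\},\dots,\{i_n,j_n\}\}$ of $\{1,\dots,2n\}$ into $n$ pairs (with $i_k<j_k$), i.e. over all perfect matchings of the complete graph $K_{2n}$. For the adjacency matrix $A(G)$ of a graph $G$ on vertex set $\{1,\dots,2n\}$, $\mathrm{hafn}\,A(G)=\mathrm{perfmat}\,G$, and the $i$-th row sum $r_i$ is $\deg i$. *)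

(* Reals are represented in algC (algebraic complex numbers);
   (d!)^(1/(2d)) is the nonnegative real (2d)-th root of d!, i.e. (2d).-root d!. *)
From HB Require Import structures.
From mathcomp Require Import all_boot all_order all_algebra all_field.
Set Implicit Arguments. Unset Strict Implicit. Unset Printing Implicit Defensive.
Import Order.TTheory GRing.Theory Num.Theory.

Definition simple_graph (T : finType) (e : rel T) : Prop :=
  symmetric e /\ irreflexive e.

Definition deg (T : finType) (e : rel T) (v : T) : nat := #|[set w | e v w]|.

Definition perfect_matching (T : finType) (e : rel T) (M : {set {set T}}) : bool :=
  partition M [set: T] &&
  [forall B in M, exists x, exists y, e x y && (B == [set x; y])].

Definition perfmat (T : finType) (e : rel T) : nat :=
  #|[set M : {set {set T}} | perfect_matching e M]|.

Local Open Scope ring_scope.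

Definition bregman_factor (d : nat) : algC :=
  if d == 0%N then 0 else (d.*2).-root (d`!)%:R.

(* We square both sides and pass through permanents of 0/1 matrices.
   1. Bregman's theorem: per R <= \prod_i (r_i!)^(1/r_i), where a relation
      R : rel T is read as a 0/1 matrix, per R counts the permutations s with
      R i (s i) for all i, and r_i is the i-th row sum.  We follow Schrijver's
      proof, by induction on the number of free entries (entries that are not
      alone in both their row and their column): raise per R to the power
      #|free rows| * per R, bound each free row by the counting form of AM-GM
      applied to the Laplace expansion along that row, use the induction
      hypothesis on the matrices pinned at a free entry, and collapse the
      result with an exact product identity (pinned_product).
   2. perfmat G ^ 2 <= per G: a pair of perfect matchings, with partner maps
      f and g, is sent to the permutation orienting every alternating cycle of
      their union in a canonical direction; f and g can be read back from it.
   3. ((d!)^(1/(2d)))^2 = (d!)^(1/d), so the theorem follows from 1 and 2. *)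
From HB Require Import structures.
From mathcomp Require Import all_boot all_order all_fingroup all_algebra all_field.
Import Order.TTheory GRing.Theory Num.Theory.

Set Implicit Arguments. Unset Strict Implicit. Unset Printing Implicit Defensive.

Lemma big_multiset (R : Type) (idx : R) (op : Monoid.com_law idx)
    (I : finType) (A : {pred I}) (t : I -> nat) (M : nat) (F : I -> R) :
  {in A, forall k, t k <= M}%N ->
  \big[op/idx]_(p in [pred p : I * 'I_M | (p.1 \in A) && (p.2 < t p.1)%N]) F p.1
    = \big[op/idx]_(k in A) \big[op/idx]_(m < t k) F k.
Proof.
move=> tM; rewrite (eq_bigl (fun p : I * 'I_M => (p.1 \in A) && (p.2 < t p.1)%N)) //.
rewrite -(pair_big_dep (fun k => k \in A) (fun k (m : 'I_M) => (m < t k)%N) (fun k _ => F k)).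
by apply: eq_bigr => k kA; rewrite (big_ord_narrow (tM k kA)).
Qed.

Local Open Scope ring_scope.

(* The counting form of AM-GM: with T = \sum_k t k, T^T <= #|A|^T \prod_k t_k^t_k.
   It is AM-GM applied to the multiset where T / (#|A| t_k) occurs t_k times. *)
Lemma sum_pow_sum_le (I : finType) (A : {pred I}) (t : I -> nat) :
  ((\sum_(k in A) t k) ^ (\sum_(k in A) t k)
     <= #|A| ^ (\sum_(k in A) t k) * \prod_(k in A) t k ^ t k)%N.
Proof.
set T := (\sum_(k in A) t k)%N; have [T0|T_gt0] := posnP T.
  by rewrite T0 !expn0 mul1n prodn_gt0 // => k; rewrite expn_gt0; case: (t k).
have A_gt0 : (0 < #|A|)%N.
  rewrite lt0n; apply: contraTneq T_gt0 => /card0_eq A0.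
  by rewrite -leqNgt /T big_pred0.
have tT : {in A, forall k, t k <= T}%N.
  by move=> k kA; rewrite /T (bigD1 k) //= leq_addr.
set c : algC := T%:R / #|A|%:R.
have c_ge0 : 0 <= c by rewrite divr_ge0 ?ler0n.
pose E (k : I) := c / (t k)%:R.
pose P := [pred p : I * 'I_T.+1 | (p.1 \in A) && (p.2 < t p.1)%N].
have tT1 : {in A, forall k, t k <= T.+1}%N by move=> k /tT /leqW.
have cardP : #|P| = T.
  rewrite -sum1_card (big_multiset _ (fun=> 1%N) tT1) /T.
  by apply: eq_bigr => k _; rewrite sum1_card card_ord.
have sumE : \sum_(p in P) E p.1 <= T%:R.
  rewrite (big_multiset _ E tT1).
  apply: (@le_trans _ _ (\sum_(k in A) c)); last first.
    by rewrite sumr_const -[_ *+ #|A|]mulr_natr /c divfK // pnatr_eq0 -lt0n.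
  apply: ler_sum => k _; rewrite sumr_const card_ord /E.
  have [->|t_gt0] := posnP (t k); first by rewrite mulr0n.
  by rewrite -[_ *+ t k]mulr_natr divfK // pnatr_eq0 -lt0n.
have AGM := (@leif_AGM _ _ P (fun p => E p.1)
               (fun p _ => divr_ge0 c_ge0 (ler0n _ (t p.1)))).1.
rewrite {}cardP in AGM.
have mean_le1 : ((\sum_(p in P) E p.1) / T%:R) ^+ T <= 1.
  rewrite exprn_ile1 ?divr_ge0 ?sumr_ge0 // ?ler_pdivrMr ?mul1r ?ltr0n //.
  by move=> p _; rewrite divr_ge0.
have {AGM mean_le1} := le_trans AGM mean_le1.
rewrite (big_multiset _ E tT1) /E.
under eq_bigr do rewrite prodr_const card_ord expr_div_n.
rewrite prodf_div -(big_morph (fun n => c ^+ n) (exprD c) (expr0 c)) -/T.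
have prod_gt0 : 0 < \prod_(k in A) (t k)%:R ^+ t k :> algC.
  by apply: prodr_gt0 => k _; rewrite -natrX ltr0n expn_gt0; case: (t k).
rewrite ler_pdivrMr // mul1r /c expr_div_n ler_pdivrMr ?exprn_gt0 ?ltr0n //.
rewrite -(ler_nat algC) natrM !natrX natr_prod mulrC.
by under [in X in _ -> X]eq_bigr do rewrite natrX.
Qed.

Definition bregman_root (r : nat) : algC :=
  if r == 0%N then 0 else r.-root (r`!)%:R.

Lemma bregman_root_ge0 (r : nat) : 0 <= bregman_root r.
Proof.
rewrite /bregman_root; case: eqP => // /eqP r_neq0.
by rewrite rootC_ge0 ?ler0n // lt0n.
Qed.

Lemma bregman_root1 : bregman_root 1 = 1.
Proof. by rewrite /bregman_root /= root1C. Qed.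

Lemma bregman_rootX (r : nat) : bregman_root r ^+ r = (r`!)%:R.
Proof.
rewrite /bregman_root; case: eqP => [->|/eqP r_neq0]; first by rewrite expr0.
by rewrite rootCK // lt0n.
Qed.

Section Permanent.
Variable T : finType.
Implicit Types (R : rel T) (s : {perm T}) (i j k l : T).

Definition supported R : {set {perm T}} := [set s : {perm T} | [forall i, R i (s i)]].
Definition per R : nat := #|supported R|.

Lemma supportedP R s : reflect (forall i, R i (s i)) (s \in supported R).
Proof. by rewrite inE; apply: forallP. Qed.

Definition pin R i k : rel T :=
  fun j l => if j == i then l == k else R j l && (l != k).

(* An entry (i, k) of R that is not the only entry of both its row and its
   column; pinning it strictly decreases the number of such entries. *)
Definition free_entry R i k : bool :=
  R i k && ~~ ((deg R i == 1%N) && [forall j, R j k ==> (j == i)]).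
Definition free_entries R : {set T * T} := [set p | free_entry R p.1 p.2].
Definition free_rows R : {set T} := [set i | [exists k, free_entry R i k]].

Lemma deg_pin R i k j :
  deg (pin R i k) j = if j == i then 1%N else (deg R j - R j k)%N.
Proof.
rewrite /deg /pin; case: (j =P i) => [_|_].
  have -> : [set l | l == k] = [set k] by apply/setP => l; rewrite !inE.
  exact: cards1.
rewrite (cardsD1 k [set l | R j l]) inE addKn.
by apply: eq_card => l; rewrite !inE andbC.
Qed.

Lemma pin_sub R i k j l : R i k -> pin R i k j l -> R j l.
Proof. by rewrite /pin; case: eqP => [-> Rik /eqP ->|_ _ /andP[]]. Qed.

Lemma supported_pin R i k : R i k ->
  supported (pin R i k) = [set s in supported R | s i == k].
Proof.
move=> Rik; apply/setP => s; rewrite !inE.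
apply/forallP/andP => [sR|[/forallP sR /eqP sik] j].
  have sik := sR i; rewrite /pin eqxx in sik; split=> //.
  by apply/forallP => j; apply: pin_sub Rik (sR j).
rewrite /pin; case: eqP => [->|/eqP ji]; first by rewrite sik.
by rewrite sR -sik (inj_eq perm_inj).
Qed.

Lemma per_expand R i :
  per R = (\sum_(k in [set k | R i k]) per (pin R i k))%N.
Proof.
rewrite /per -sum1_card (partition_big (fun s : {perm T} => s i) (mem [set k | R i k])).
  apply: eq_bigr => k /[!inE] Rik; rewrite supported_pin // -sum1_card.
  by apply: eq_bigl => s; rewrite !inE.
by move=> s; rewrite !inE => /forallP ->.
Qed.

Lemma prod_supported_row R i (F : T -> algC) :
  \prod_(s in supported R) F (s i)
    = \prod_(k in [set k | R i k]) F k ^+ per (pin R i k).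
Proof.
rewrite (partition_big (fun s : {perm T} => s i) (mem [set k | R i k])).
  apply: eq_bigr => k /[!inE] Rik; rewrite /per supported_pin // -prodr_const.
  apply: eq_big => s; first by rewrite !inE.
  by rewrite !inE => /andP[_ /eqP ->].
by move=> s; rewrite !inE => /forallP ->.
Qed.

Lemma deg1_uniq R j l l' : deg R j = 1%N -> R j l -> R j l' -> l = l'.
Proof.
move=> /eqP/cards1P[x Rj] Rjl Rjl'.
have : l \in [set l | R j l] by rewrite inE.
have : l' \in [set l | R j l] by rewrite inE.
by rewrite Rj !inE => /eqP -> /eqP ->.
Qed.

Lemma free_entries_pin R i k : free_entry R i k ->
  (#|free_entries (pin R i k)| < #|free_entries R|)%N.
Proof.
move=> free_ik; have Rik : R i k by case/andP: free_ik.
apply: proper_card; apply/properP; split.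
  apply/subsetP => -[j l]; rewrite !inE /= => /andP[pin_jl not_forced].
  have Rjl := pin_sub Rik pin_jl; rewrite /free_entry Rjl /=.
  apply: contra not_forced => /andP[/eqP deg1 /forallP col]; apply/andP; split.
    rewrite deg_pin; case: (j =P i) => [//|/eqP ji].
    have -> : R j k = false.
      apply/negP => Rjk; move: pin_jl.
      by rewrite /pin (negbTE ji) (deg1_uniq deg1 Rjl Rjk) eqxx andbF.
    by rewrite subn0 deg1.
  by apply/forallP => j'; apply/implyP => /(pin_sub Rik); apply/implyP.
exists (i, k); first by rewrite inE.
rewrite inE /= /free_entry negb_and negbK deg_pin eqxx /=; apply/orP; right.
by apply/forallP => j; rewrite /pin; case: eqP => _; rewrite ?implybT //= eqxx andbF.
Qed.

Lemma deg_gt0 R s j : s \in supported R -> (0 < deg R j)%N.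
Proof. by move=> /supportedP sR; apply/card_gt0P; exists (s j); rewrite inE. Qed.

Lemma forced_row R s i : s \in supported R -> i \notin free_rows R ->
  deg R i = 1%N /\ (forall j, R j (s i) -> j = i).
Proof.
rewrite !inE => /forallP sR /existsPn /(_ (s i)).
rewrite /free_entry sR negbK => /andP[/eqP deg1 /forallP col].
by split=> // j Rj; apply/eqP; apply: (implyP (col j) Rj).
Qed.

Lemma free_row_entry R s i : s \in supported R -> i \in free_rows R ->
  free_entry R i (s i).
Proof.
rewrite !inE => /forallP sR /existsP[k /andP[Rik forced_k]].
rewrite /free_entry sR; apply: contra forced_k => /andP[/eqP deg1 col].
by rewrite deg1 -(deg1_uniq deg1 (sR i) Rik) col.
Qed.
End Permanent.

(* It is proved column by column: for a fixed column j the factors only take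
   the values w (r_j - 1), w r_j and 1, with explicit multiplicities. *)
Section PinnedProduct.
Variables (T : finType) (R : rel T) (s : {perm T}).
Hypothesis sR : s \in supported R.
Local Notation J := (free_rows R).

(* For a free row j, the other free rows i whose pinned column s i meets row j
   are exactly the preimages under s of the entries of row j other than s j. *)
Lemma card_rows_meeting j : j \in J ->
  #|[set i in J :\ j | R j (s i)]| = (deg R j).-1.
Proof.
move=> jJ; have /supportedP sRj := sR.
have -> : [set i in J :\ j | R j (s i)] = s @^-1: ([set l | R j l] :\ s j).
  apply/setP => i; rewrite !inE (inj_eq perm_inj).
  case: (i =P j) => [->|/eqP ij] //=; case Rjsi: (R j (s i)); rewrite ?andbF //.
  rewrite andbT; apply: contraT => iJ.
  have := @forced_row _ _ _ i sR; rewrite inE => /(_ iJ) [_ /(_ j Rjsi) ji].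
  by rewrite ji eqxx in ij.
rewrite card_preimset; last exact: perm_inj.
by rewrite /deg (cardsD1 (s j) [set l | R j l]) inE sRj.
Qed.

Lemma deg_le_free_rows j : j \in J -> (deg R j <= #|J|)%N.
Proof.
move=> jJ; rewrite -(prednK (deg_gt0 j sR)) -card_rows_meeting // (cardsD1 j J) jJ.
by rewrite add1n ltnS subset_leq_card //; apply/subsetP => i; rewrite inE => /andP[].
Qed.

(* A forced row keeps degree 1 after any pinning. *)
Lemma column_product_forced j : j \notin J ->
  \prod_(i in J) bregman_root (deg (pin R i (s i)) j) = 1.
Proof.
move=> jJ; have [deg1 _] := forced_row sR jJ; have /supportedP sRj := sR.
apply: big1 => i iJ; have ij : (j == i) = false by apply: contraNF jJ => /eqP ->.
rewrite deg_pin ij deg1.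
have -> : R j (s i) = false.
  by apply: contraFF ij => /(deg1_uniq deg1 (sRj j)) /perm_inj ->.
exact: bregman_root1.
Qed.

(* A free row j has degree r_j - 1 after pinning one of the r_j - 1 rows
   meeting it, degree r_j after pinning another row, and 1 after pinning j. *)
Lemma column_product_free j : j \in J ->
  \prod_(i in J) bregman_root (deg (pin R i (s i)) j)
    = bregman_root (deg R j).-1 ^+ (deg R j).-1
      * bregman_root (deg R j) ^+ (#|J| - deg R j).
Proof.
move=> jJ; set r := deg R j; set H := [set i in J :\ j | R j (s i)].
rewrite (big_setD1 j jJ) /= deg_pin eqxx bregman_root1 mul1r.
have memH i : (i \in H) = (i \in J :\ j) && R j (s i) by rewrite inE.
have HJ : H \subset J :\ j by apply/subsetP => i; rewrite memH => /andP[].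
rewrite (big_setID H) /= (setIidPr HJ).
rewrite (eq_bigr (fun=> bregman_root r.-1)); last first.
  move=> i; rewrite memH => /andP[/setD1P[ij _] Rjsi].
  by rewrite deg_pin eq_sym (negbTE ij) Rjsi subn1.
rewrite [X in _ * X](eq_bigr (fun=> bregman_root r)); last first.
  move=> i /setDP[iJj]; rewrite memH iJj /= => /negbTE Rjsi.
  by move/setD1P: iJj => [ij _]; rewrite deg_pin eq_sym (negbTE ij) Rjsi subn0.
rewrite !prodr_const card_rows_meeting // cardsD (setIidPr HJ) card_rows_meeting //.
rewrite (cardsD1 j J) jJ add1n -/r; congr (_ * _ ^+ _).
by rewrite -[in RHS](prednK (deg_gt0 j sR : (0 < r)%N)) subSS.
Qed.

Lemma pinned_product :
  \prod_(i in J) ((deg R i)%:R * \prod_j bregman_root (deg (pin R i (s i)) j))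
    = (\prod_(j in J) bregman_root (deg R j)) ^+ #|J|.
Proof.
rewrite big_split /= [X in _ * X]exchange_big /= [X in _ * X](bigID (mem J)) /=.
rewrite [X in _ * (_ * X)]big1 ?mulr1; last by move=> j /column_product_forced.
rewrite (eq_bigr _ column_product_free) -big_split /= -prodrXl.
apply: eq_bigr => j jJ; have r_gt0 := deg_gt0 j sR.
rewrite mulrA -[in X in X * _](prednK r_gt0) !bregman_rootX -natrM -factS.
by rewrite prednK // -bregman_rootX -exprD subnKC ?deg_le_free_rows.
Qed.
End PinnedProduct.

Section Bregman.
Variable T : finType.
Implicit Types (R : rel T) (s : {perm T}).

(* Forced rows have weight 1, so only free rows contribute to Bregman's bound. *)
Lemma prod_bregman_free_rows R s : s \in supported R ->
  \prod_i bregman_root (deg R i) = \prod_(i in free_rows R) bregman_root (deg R i).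
Proof.
move=> sR; rewrite [LHS](bigID (mem (free_rows R))) /= [X in _ * X]big1 ?mulr1 //.
by move=> i iJ; have [-> _] := forced_row sR iJ; rewrite bregman_root1.
Qed.

(* Without free rows every supported permutation is forced everywhere. *)
Lemma per_le1 R : free_rows R = set0 -> (per R <= 1)%N.
Proof.
move=> J0; apply/card_le1_eqP => s s' sR s'R; apply/permP => i.
have iJ : i \notin free_rows R by rewrite J0 inE.
have [deg1 _] := forced_row sR iJ.
by apply: deg1_uniq deg1 _ _; apply/supportedP.
Qed.

Lemma per_pow_le R i :
  (per R)%:R ^+ per R <= (deg R i)%:R ^+ per R
    * \prod_(k in [set k | R i k]) (per (pin R i k))%:R ^+ per (pin R i k) :> algC.
Proof.
under eq_bigr do rewrite -natrX.
rewrite -natr_prod -!natrX -natrM ler_nat (per_expand R i).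
exact: sum_pow_sum_le.
Qed.

Lemma prod_per_pow_regroup R :
  \prod_(i in free_rows R) ((deg R i)%:R ^+ per R
     * \prod_(k in [set k | R i k]) (per (pin R i k))%:R ^+ per (pin R i k))
  = \prod_(s in supported R)
      \prod_(i in free_rows R) ((deg R i)%:R * (per (pin R i (s i)))%:R) :> algC.
Proof.
rewrite [RHS]exchange_big /=; apply: eq_bigr => i _.
by rewrite big_split /= prodr_const (prod_supported_row _ _ (fun k => (per (pin R i k))%:R)).
Qed.

Lemma bregman_step R :
  (forall i k, free_entry R i k ->
     (per (pin R i k))%:R <= \prod_j bregman_root (deg (pin R i k) j)) ->
  (per R)%:R <= \prod_i bregman_root (deg R i).
Proof.
move=> IH; have [->|per_gt0] := posnP (per R).
  by rewrite prodr_ge0 // => i _; apply: bregman_root_ge0.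
have [s0 s0R] : exists s0, s0 \in supported R by apply/card_gt0P.
rewrite (prod_bregman_free_rows s0R).
set J := free_rows R; set P := per R.
have [J0|J_gt0] := posnP #|J|.
  have J_empty : J = set0 by apply: cards0_eq.
  by rewrite J_empty big_set0 lern1 per_le1.
have bound_ge0 : 0 <= \prod_(i in J) bregman_root (deg R i).
  by apply: prodr_ge0 => i _; apply: bregman_root_ge0.
rewrite -(ler_pXn2r (n := (#|J| * P)%N)) ?muln_gt0 ?J_gt0 // ?nnegrE ?ler0n //.
rewrite mulnC exprM -prodr_const.
apply: (@le_trans _ _ (\prod_(i in J) ((deg R i)%:R ^+ P
          * \prod_(k in [set k | R i k]) (per (pin R i k))%:R ^+ per (pin R i k)))).
  by apply: ler_prod => i _; rewrite exprn_ge0 ?ler0n //= per_pow_le.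
rewrite prod_per_pow_regroup.
apply: (@le_trans _ _ (\prod_(s in supported R) \prod_(i in J)
          ((deg R i)%:R * \prod_j bregman_root (deg (pin R i (s i)) j)))).
  apply: ler_prod => s sR; rewrite prodr_ge0 /=; last by move=> i _; rewrite mulr_ge0 ?ler0n.
  apply: ler_prod => i iJ; rewrite mulr_ge0 ?ler0n //=.
  by rewrite ler_wpM2l ?ler0n // IH // free_row_entry.
by rewrite (eq_bigr _ (fun s sR => pinned_product sR)) prodr_const -exprM mulnC.
Qed.

Theorem bregman R : (per R)%:R <= \prod_i bregman_root (deg R i).
Proof.
move: {2}#|free_entries R| (leqnn #|free_entries R|) => n.
elim: n R => [|n IHn] R le_n; apply: bregman_step => i k /free_entries_pin lt_n.
  by move: (leq_trans lt_n le_n).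
by apply: IHn; rewrite -ltnS (leq_trans lt_n le_n).
Qed.
End Bregman.

Local Close Scope ring_scope.

(* The partner maps of perfect matchings are the fixed-point-free involutions. *)
Definition fpf_involution (T : finType) (f : T -> T) : Prop :=
  involutive f /\ forall v, f v != v.

(* The key of v for h: the enum rank of the least element of the h-orbit of v.
   For injective h, two points share their key iff they lie on the same orbit. *)
Definition orbit_key (T : finType) (h : T -> T) (v : T) : nat :=
  enum_rank [arg min_(w < v | fconnect h v w) enum_rank w].

Lemma orbit_key_eq (T : finType) (h h' : T -> T) v v' :
  fconnect h v =1 fconnect h' v' -> orbit_key h v = orbit_key h' v'.
Proof.
move=> same_orbit; rewrite /orbit_key.
case: arg_minnP => [|a orb_a min_a]; first exact: connect0.
case: arg_minnP => [|b orb_b min_b]; first exact: connect0.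
by apply/eqP; rewrite eqn_leq min_a ?same_orbit // min_b // -same_orbit.
Qed.

Lemma orbit_key_mem (T : finType) (h : T -> T) v :
  exists2 a, fconnect h v a & orbit_key h v = enum_rank a.
Proof.
rewrite /orbit_key; case: arg_minnP => [|a orb_a _]; first exact: connect0.
by exists a.
Qed.

Lemma fconnect_iterP (T : finType) (h : T -> T) v w :
  fconnect h v w <-> exists n, iter n h v = w.
Proof.
split=> [vw|[n <-]]; last exact: fconnect_iter.
by exists (findex h v w); apply: iter_findex.
Qed.

(* If f and g are the partner
   maps of two perfect matchings, the orbits of rot := g \o f run along the
   alternating cycles of their union; on each such cycle one of the two
   orientations is selected by comparing orbit keys, and orient f g follows f
   or g accordingly. *)
Section Orientation.
Variables (T : finType) (f g : T -> T).
Hypotheses (Hf : fpf_involution f) (Hg : fpf_involution g).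

Definition rot (v : T) : T := g (f v).
Definition forward (v : T) : bool := (orbit_key rot v < orbit_key rot (f v))%N.
Definition orient (v : T) : T := if forward v then f v else g v.

Lemma rot_inj : injective rot.
Proof. by case: Hf Hg => fK _ [gK _] x y /(inv_inj gK) /(inv_inj fK). Qed.

(* Parity: v and f v lie on different rot-orbits. *)
Lemma f_not_in_rot_orbit v : ~~ fconnect rot v (f v).
Proof.
case: Hf Hg => fK f_neq [gK g_neq]; apply/negP => /fconnect_iterP[n].
suff iter_neq k u : iter k rot u != f u /\ iter k.+1 rot u != f u.
  by have [/eqP] := iter_neq n v.
elim: k u => [|k IHk] u.
  by split; [rewrite /= eq_sym f_neq | apply: g_neq].
split; first by case: (IHk u).
rewrite iterS iterSr; apply/eqP => iter_eq.
have rot_f : rot (f (rot u)) = f u by rewrite /rot fK gK.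
rewrite -rot_f in iter_eq; move/rot_inj: iter_eq => iter_eq.
by case: (IHk (rot u)) => /eqP.
Qed.

Lemma orbit_key_rot v : orbit_key rot (rot v) = orbit_key rot v.
Proof. by apply: orbit_key_eq => w; rewrite -same_fconnect1 //; apply: rot_inj. Qed.

Lemma forward_rot v : forward (rot v) = forward v.
Proof.
case: Hf Hg => fK _ [gK _]; rewrite /forward orbit_key_rot; congr (_ < _)%N.
have -> : f v = rot (f (g (f v))) by rewrite /rot fK gK.
by rewrite orbit_key_rot.
Qed.

Lemma orbit_key_f_neq v : orbit_key rot v != orbit_key rot (f v).
Proof.
have [a orb_a ->] := orbit_key_mem rot v; have [b orb_b ->] := orbit_key_mem rot (f v).
apply/negP => /eqP/val_inj/enum_rank_inj ab; subst b.
move/negP: (f_not_in_rot_orbit v); apply; apply: connect_trans orb_a _.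
by rewrite fconnect_sym //; apply: rot_inj.
Qed.

Lemma forward_f v : forward (f v) = ~~ forward v.
Proof.
case: Hf => fK _; rewrite /forward fK; have := orbit_key_f_neq v.
by case: ltngtP.
Qed.

Lemma forward_g v : forward (g v) = ~~ forward v.
Proof.
case: Hf => fK _; have -> : g v = rot (f v) by rewrite /rot fK.
by rewrite forward_rot forward_f.
Qed.

Lemma orient_inj : injective orient.
Proof.
case: Hf Hg => fK _ [gK _] v w; rewrite /orient.
case fw_v: (forward v); case fw_w: (forward w) => vw.
- exact: (inv_inj fK).
- by move: (forward_f v) (forward_g w); rewrite vw fw_v fw_w => ->.
- by move: (forward_g v) (forward_f w); rewrite vw fw_v fw_w => ->.
- exact: (inv_inj gK).
Qed.

Lemma forward_finv v : forward (finv rot v) = forward v.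
Proof. by rewrite -[in RHS](f_finv rot_inj v) forward_rot. Qed.

Lemma orient2E v :
  orient (orient v) = (if forward v then rot else finv rot) v.
Proof.
case: Hf Hg => fK _ [gK _]; rewrite /orient; case fw_v: (forward v).
  by rewrite forward_f fw_v.
rewrite forward_g fw_v /=; apply: rot_inj.
by rewrite f_finv; [rewrite /rot fK gK | apply: rot_inj].
Qed.

Lemma orient2_iter n v :
  iter n (orient \o orient) v = iter n (if forward v then rot else finv rot) v.
Proof.
have fw_iter k : forward (iter k (if forward v then rot else finv rot) v) = forward v.
  by elim: k => //= k; case: ifP => _; rewrite ?forward_rot ?forward_finv.
by elim: n => //= n ->; rewrite orient2E fw_iter.
Qed.

Lemma orient2_orbit v : fconnect (orient \o orient) v =1 fconnect rot v.
Proof.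
move=> w; transitivity (fconnect (if forward v then rot else finv rot) v w).
  by apply/idP/idP => /fconnect_iterP[n <-]; apply/fconnect_iterP; exists n;
     rewrite orient2_iter.
by case: (forward v); rewrite ?same_fconnect_finv //; apply: rot_inj.
Qed.

(* The orientation can be read off any permutation s agreeing with orient. *)
Definition forward_of (s : T -> T) (v : T) : bool :=
  (orbit_key (fun x => s (s x)) v < orbit_key (fun x => s (s x)) (s v))%N.

Lemma forward_ofE (s : T -> T) v : s =1 orient -> forward_of s v = forward v.
Proof.
case: Hf => fK _ sE.
have key_s u : orbit_key (fun x => s (s x)) u = orbit_key rot u.
  apply: orbit_key_eq => w; rewrite -orient2_orbit.
  by apply: eq_fconnect => x; rewrite /= !sE.
rewrite /forward_of !key_s sE /orient /forward; case: ifP => // fw_v.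
have -> : g v = rot (f v) by rewrite /rot fK.
by rewrite orbit_key_rot.
Qed.

Lemma orient_recover (s : {perm T}) : s =1 orient ->
  (forall v, f v = if forward_of s v then s v else (s^-1)%g v) /\
  (forall v, g v = if forward_of s v then (s^-1)%g v else s v).
Proof.
case: Hf Hg => fK _ [gK _] sE.
split=> v; rewrite (forward_ofE v sE); case fw_v: (forward v).
- by rewrite sE /orient fw_v.
- by symmetry; apply: (canLR (permK s)); rewrite sE /orient forward_f fw_v /= fK.
- by symmetry; apply: (canLR (permK s)); rewrite sE /orient forward_g fw_v /= gK.
- by rewrite sE /orient fw_v.
Qed.
End Orientation.

Section PerfectMatchings.
Variables (T : finType) (e : rel T).
Hypothesis simple_e : simple_graph e.
Implicit Types (M : {set {set T}}) (v : T).

Definition partner M v : T := odflt v [pick y in pblock M v | y != v].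

Lemma partner_pair M u x y :
  pblock M u = [set x; y] -> x != y -> u \in [set x; y] ->
  partner M u = if u == x then y else x.
Proof.
move=> Bu xy uB; rewrite /partner Bu.
have yx : (y == x) = false by rewrite eq_sym (negbTE xy).
case: pickP => [z /andP[zB zu]|none] /=.
  move: uB zB zu; rewrite !inE.
  by case/orP=> /eqP ->; case/orP=> /eqP ->; rewrite ?eqxx ?yx.
have := none (if u == x then y else x); rewrite !inE.
by move: uB; rewrite !inE; case/orP=> /eqP ->; rewrite ?eqxx ?yx ?(negbTE xy) ?orbT /= ?eqxx.
Qed.

Lemma partnerP M : perfect_matching e M -> forall v,
  [/\ e v (partner M v), partner M (partner M v) = v
    & pblock M v = [set v; partner M v]].
Proof.
case: simple_e => esym eirr /andP[/and3P[/eqP cov trivM _] /forallP edges] v.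
have vM : v \in cover M by rewrite cov inE.
have BM := pblock_mem vM.
have := edges (pblock M v); rewrite BM /=.
move=> /existsP[x /existsP[y /andP[exy /eqP Bxy]]].
have xy : x != y by apply: contraTneq exy => ->; rewrite eirr.
have vB : v \in [set x; y] by rewrite -Bxy mem_pblock.
set o := if v == x then y else x.
have oB : o \in [set x; y] by rewrite /o; case: ifP; rewrite !inE eqxx ?orbT.
have Bo : pblock M o = [set x; y].
  by rewrite -Bxy; apply: def_pblock; rewrite // Bxy.
have yx : (y == x) = false by rewrite eq_sym (negbTE xy).
rewrite (partner_pair Bxy xy vB) (partner_pair Bo xy oB) /o.
move: vB; rewrite !inE; case/orP => /eqP v_eq; subst v; rewrite ?eqxx ?yx.
  by split.
by split; rewrite ?eqxx // 1?esym // Bxy setUC.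
Qed.

Lemma partner_fpf M : perfect_matching e M -> fpf_involution (partner M).
Proof.
move=> pmM; split=> v; first by have [] := partnerP pmM v.
have [e_vp _ _] := partnerP pmM v; apply: contraTneq e_vp => ->.
by case: simple_e => _ ->.
Qed.

Lemma matching_of_partner M : perfect_matching e M ->
  M = [set [set v; partner M v] | v : T].
Proof.
move=> pmM; have /andP[/and3P[/eqP cov trivM M_no0] _] := pmM.
apply/setP => B; apply/idP/imsetP => [BM|[v _ ->]].
  have /set0Pn[x xB] : B != set0 by apply: contraNneq M_no0 => <-.
  by exists x => //; have [_ _ <-] := partnerP pmM x; apply: esym; apply: def_pblock.
have [_ _ <-] := partnerP pmM v; apply: pblock_mem; by rewrite cov inE.
Qed.

Definition orient_perm (p : {set {set T}} * {set {set T}}) : {perm T} :=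
  odflt 1%g [pick s : {perm T} | [forall v, s v == orient (partner p.1) (partner p.2) v]].

Lemma orient_permE M1 M2 : perfect_matching e M1 -> perfect_matching e M2 ->
  orient_perm (M1, M2) =1 orient (partner M1) (partner M2).
Proof.
move=> pm1 pm2; rewrite /orient_perm; case: pickP => [s /forallP sE v|none] /=.
  exact/eqP.
have inj := orient_inj (partner_fpf pm1) (partner_fpf pm2).
by have /forallPn[v] := negbT (none (perm inj)); rewrite permE eqxx.
Qed.

(* Pairs of perfect matchings inject into the permutations supported by e. *)
Lemma perfmat_sqr_le_per : (perfmat e ^ 2 <= per e)%N.
Proof.
set PM := [set M | perfect_matching e M].
rewrite /perfmat -/PM -mulnn -cardsX -(card_in_imset (f := orient_perm)).
  apply: subset_leq_card; apply/subsetP => s /imsetP[[M1 M2]].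
  rewrite !inE /= => /andP[pm1 pm2] ->; apply/forallP => v.
  rewrite orient_permE // /orient.
  by have [e1 _ _] := partnerP pm1 v; have [e2 _ _] := partnerP pm2 v; case: ifP.
move=> [M1 M2] [N1 N2]; rewrite !inE /= => /andP[pmM1 pmM2] /andP[pmN1 pmN2] sMN.
have [M1E M2E] :=
  orient_recover (partner_fpf pmM1) (partner_fpf pmM2) (orient_permE pmM1 pmM2).
have [N1E N2E] :=
  orient_recover (partner_fpf pmN1) (partner_fpf pmN2) (orient_permE pmN1 pmN2).
rewrite sMN in M1E M2E.
rewrite (matching_of_partner pmM1) (matching_of_partner pmM2).
rewrite (matching_of_partner pmN1) (matching_of_partner pmN2).
by congr (_, _); apply: eq_imset => v; rewrite ?M1E ?N1E ?M2E ?N2E.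
Qed.
End PerfectMatchings.

Local Open Scope ring_scope.

Lemma bregman_factor_sqr (d : nat) : bregman_factor d ^+ 2 = bregman_root d.
Proof.
rewrite /bregman_factor /bregman_root; case: eqP => [_|/eqP d_neq0]; first by rewrite expr0n.
have d2_gt0 : (0 < d.*2)%N by rewrite double_gt0 lt0n.
set y := (d.*2).-root (d`!)%:R.
have -> : (d`!)%:R = (y ^+ 2) ^+ d :> algC by rewrite -exprM mul2n rootCK.
by rewrite exprCK ?lt0n // exprn_ge0 // rootC_ge0 // ler0n.
Qed.

Theorem theorem4p1 (T : finType) (e : rel T) :
  simple_graph e -> ~~ odd #|T| ->
  (perfmat e)%:R <= \prod_(v : T) bregman_factor (deg e v).
Proof.
move=> simple_e _.
have factor_ge0 v : 0 <= bregman_factor (deg e v).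
  rewrite /bregman_factor; case: eqP => // /eqP d_neq0.
  by rewrite rootC_ge0 ?ler0n // double_gt0 lt0n.
rewrite -(ler_pXn2r (n := 2)) // ?nnegrE ?ler0n ?prodr_ge0 // -prodrXl.
under eq_bigr do rewrite bregman_factor_sqr.
apply: le_trans (bregman e); rewrite -natrX ler_nat.
exact: perfmat_sqr_le_per.
Qed.
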